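(* Let $h\in\mathbf N$ and let $s$ be a right-infinite word over $\{x,y\}$ such that the frontier $f={}^ts\;y\,x^h\,y\;s$ is admissible. Embed $f$ in the plane and let $t$ be the $SL_2$-tiling with values in $\mathbf N$ extending it. Let $I$ be the lattice point of the embedded path lying between the factor $x^h$ and the following letter $y$ of the middle factor $yx^hy$, and let $J=I+(0,-1)$, $K=I+(0,-2)$. Put $i_n=t(I+n(1,0))$, $j_n=t(J+n(1,-1))$, $k_n=t(K+n(1,-1))$. Then for all $n\in\mathbf N$, $$j_n=(h+1)\,i_n^2\qquad\text{and}\qquad k_n+1=(h+1)\,i_n\,i_{n+1}.$$
   Context: Cartesian coordinates on $\mathbf Z^2$. The transpose ${}^tw$ of a (finite or infinite) word $w$ over $\{x,y\}$ is obtained by reversing $w$ and exchanging $x$ and $y$; the transpose of a right-infinite word is left-infinite. A frontier is a bi-infinite word over $\{x,y\}$, admissible if neither $(x_n)_{n\ge0}$ nor $(x_n)_{n\le0}$ is ultimately constant; it is embedded as lattice points $P_i$ with $P_i-P_{i-1}=(1,0)$ if $x_i=x$ and $(0,1)$ if $x_i=y$. An $SL_2$-tiling extending it is $t:\mathbf Z^2\to\mathbf N$ with $t(a,b+1)t(a+1,b)-t(a,b)t(a+1,b+1)=1$ for all $(a,b)$ and $t(P_i)=1$ for all $i$ (it exists and is unique). *)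

From Stdlib Require Import ZArith List.
Open Scope Z_scope.

Inductive letter := lx | ly.

Definition swap (c : letter) : letter := match c with lx => ly | ly => lx end.

(* A right-infinite word w_0 w_1 w_2 ... is a function nat -> letter.
   A left-infinite word ... w_2 w_1 w_0 is also represented as nat -> letter,
   index k being the distance from the right end (0 = rightmost letter). *)

(* Transpose of a right-infinite word: reverse and exchange x,y; it is the
   left-infinite word whose k-th letter from the right is swap (s k). *)
Definition transpose_r (s : nat -> letter) : nat -> letter :=
  fun k => swap (s k).

(* Bi-infinite word L m R (left-infinite L, finite m, right-infinite R),
   indexed by Z so that the finite factor m occupies positions 0 .. |m|-1. *)
Definition bi_concat (L : nat -> letter) (m : list letter) (R : nat -> letter)
  : Z -> letter :=
  fun n =>
    if n <? 0 then L (Z.to_nat (- n - 1))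
    else if n <? Z.of_nat (length m) then nth (Z.to_nat n) m lx
    else R (Z.to_nat n - length m)%nat.

Definition mid_factor (h : nat) : list letter := ly :: repeat lx h ++ ly :: nil.

(* The frontier  ^t s  y x^h y  s  (y at position 0, x^h at 1..h, y at h+1). *)
Definition frontier (s : nat -> letter) (h : nat) : Z -> letter :=
  bi_concat (transpose_r s) (mid_factor h) s.

Definition ult_const_right (f : Z -> letter) : Prop :=
  exists N c, forall n, N <= n -> f n = c.
Definition ult_const_left (f : Z -> letter) : Prop :=
  exists N c, forall n, n <= N -> f n = c.

Definition admissible (f : Z -> letter) : Prop :=
  ~ ult_const_right f /\ ~ ult_const_left f.

Definition step (c : letter) : Z * Z :=
  match c with lx => (1, 0) | ly => (0, 1) end.

Definition embeds (f : Z -> letter) (P : Z -> Z * Z) : Prop :=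
  forall i, fst (P i) = fst (P (i - 1)) + fst (step (f i)) /\
            snd (P i) = snd (P (i - 1)) + snd (step (f i)).

Definition SL2_tiling (t : Z -> Z -> nat) : Prop :=
  forall a b,
    Z.of_nat (t a (b + 1)) * Z.of_nat (t (a + 1) b)
    - Z.of_nat (t a b) * Z.of_nat (t (a + 1) (b + 1)) = 1.

Definition extends (t : Z -> Z -> nat) (P : Z -> Z * Z) : Prop :=
  forall i, t (fst (P i)) (snd (P i)) = 1%nat.

From Stdlib Require Import ZArith List Lia Classical.
Open Scope Z_scope.

(* 1. Every SL_2-tiling t with values in N is represented by two sequences of
      vectors of Z^2: t(a,b) = det(X_a, Y_b), with det(X_a, X_(a+1)) = 1 and
      det(Y_(b+1), Y_b) = 1.  The vectors are read off from two adjacent rows,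
      and the identity propagates to the whole plane because a tiling without
      zero entries is determined by two adjacent rows and one column.
   2. Along a path of 1's, a horizontal step (c,r) -> (c+1,r) gives
      X_(c+1) = X_c + Y_r and a vertical step (c,r) -> (c,r+1) gives
      Y_(r+1) = X_c + Y_r.
   3. The frontier ^t s . y x^h y . s is symmetric: the walk to the right of
      the middle factor reads s, the walk to the left reads s transposed.
      Hence one fixed linear map Phi (the "hook map" of y x^h y, determined by
      the vectors at the middle factor) sends X_c to Y_r for every pair of
      mirror points; in particular Y_(b-1-n) = Phi(X_(a+n)) where I = (a,b).
   4. The values j_n = det(X_(a+n), Phi X_(a+n)) and
      k_n = det(X_(a+n), Phi X_(a+n+1)) are then computed by a determinant
      identity for Phi. *)

Definition vadd (u v : Z * Z) : Z * Z := (fst u + fst v, snd u + snd v).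
Definition vopp (u : Z * Z) : Z * Z := (- fst u, - snd u).
Definition vsub (u v : Z * Z) : Z * Z := vadd u (vopp v).
Definition vscal (k : Z) (u : Z * Z) : Z * Z := (k * fst u, k * snd u).
Definition det (u v : Z * Z) : Z := fst u * snd v - snd u * fst v.

Ltac vec_ring :=
  unfold vsub, vadd, vopp, vscal, det in *;
  first [ apply injective_projections; cbn [fst snd]; ring | cbn [fst snd]; ring ].

Lemma cramer (u w z : Z * Z) :
  vscal (det u w) z = vadd (vscal (det z w) u) (vscal (det u z) w).
Proof. vec_ring. Qed.

Lemma plucker (u1 u2 v1 v2 : Z * Z) :
  det u1 v2 * det u2 v1 - det u1 v1 * det u2 v2 = det u1 u2 * det v2 v1.
Proof. vec_ring. Qed.

Lemma det_self (u : Z * Z) : det u u = 0.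
Proof. vec_ring. Qed.

(* Three vectors with pairwise determinant 1 (in this order) satisfy v = u + w:
   the frieze rule behind every step along a path of 1's. *)
Lemma unimodular_sum (u v w : Z * Z) :
  det u w = 1 -> det v w = 1 -> det u v = 1 -> v = vadd u w.
Proof.
  intros Huw Hvw Huv.
  set (z := vsub v (vadd u w)).
  assert (Hzw : det z w = det v w - det u w) by (unfold z; vec_ring).
  assert (Huz : det u z = det u v - det u w) by (unfold z; vec_ring).
  pose proof (cramer u w z) as Hz.
  rewrite Hzw, Huz, Huw, Hvw, Huv in Hz.
  unfold vscal in Hz. rewrite !Z.mul_1_l, !Z.mul_0_l in Hz.
  destruct u, v, w. unfold z, vadd, vsub, vopp in Hz |- *; cbn [fst snd] in Hz |- *.
  injection Hz as H1 H2. f_equal; lia.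
Qed.

Definition is_SL2 (T : Z -> Z -> Z) : Prop :=
  forall a b, T a (b + 1) * T (a + 1) b - T a b * T (a + 1) (b + 1) = 1.

Lemma Z_ind_both (Q : Z -> Prop) :
  Q 0 -> (forall z, Q z <-> Q (z + 1)) -> forall z, Q z.
Proof.
  intros H0 Hstep. apply Z.peano_ind; [exact H0| |].
  - intros z Hz. rewrite <- Z.add_1_r. apply (Hstep z), Hz.
  - intros z Hz. apply (Hstep (Z.pred z)). replace (Z.pred z + 1) with z by lia. exact Hz.
Qed.

Lemma cross_transfer (p q x y x' y' : Z) :
  p <> 0 -> q <> 0 -> x * q - p * y = x' * q - p * y' -> (x = x' <-> y = y').
Proof.
  intros Hp Hq E. split; intro Heq; subst.
  - apply (Z.mul_reg_l _ _ p); [exact Hp | lia].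
  - apply (Z.mul_reg_r _ _ q); [exact Hq | lia].
Qed.

(* A row u adjacent to a known nonzero row r is determined by one of its
   entries: each 2x2 rule links consecutive entries of row u. *)
Lemma row_determined (T g : Z -> Z -> Z) (r u : Z) :
  (forall a, T a r <> 0) -> (forall a, g a r = T a r) ->
  (forall a, g a u * g (a + 1) r - g a r * g (a + 1) u
             = T a u * T (a + 1) r - T a r * T (a + 1) u) ->
  g 0 u = T 0 u -> forall a, g a u = T a u.
Proof.
  intros Hnz Hr Hrel H0. apply (Z_ind_both (fun a => g a u = T a u) H0). intro a.
  specialize (Hrel a). rewrite !Hr in Hrel.
  apply (cross_transfer (T a r) (T (a + 1) r)); auto.
Qed.

Lemma SL2_unique (T g : Z -> Z -> Z) :
  is_SL2 T -> is_SL2 g -> (forall a b, T a b <> 0) ->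
  (forall a, g a 0 = T a 0) -> (forall a, g a 1 = T a 1) ->
  (forall b, g 0 b = T 0 b) -> forall a b, g a b = T a b.
Proof.
  intros HT Hg Hnz H0 H1 Hcol.
  enough (Hrows : forall b, (forall a, g a b = T a b) /\ (forall a, g a (b + 1) = T a (b + 1)))
    by (intros a b; apply Hrows).
  apply Z_ind_both; [split; assumption|]. intro b.
  replace (b + 1 + 1) with (b + 2) by ring.
  split; intros [Hb Hb1]; split; try assumption.
  - apply (row_determined T g (b + 1)); auto. intro a.
    pose proof (HT a (b + 1)) as E1. pose proof (Hg a (b + 1)) as E2.
    replace (b + 1 + 1) with (b + 2) in E1, E2 by ring. lia.
  - apply (row_determined T g (b + 1)); auto. intro a.
    pose proof (HT a b) as E1. pose proof (Hg a b) as E2. lia.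
Qed.

Definition tz (t : Z -> Z -> nat) (a b : Z) : Z := Z.of_nat (t a b).

(* An N-valued SL_2-tiling has no zero: t(a,b) = 0 would make a 2x2 minor
   equal to -t(a,b-1) t(a+1,b) <= 0. *)
Lemma tiling_nonzero (t : Z -> Z -> nat) : SL2_tiling t -> forall a b, tz t a b <> 0.
Proof.
  intros Ht a b Hz. pose proof (Ht a (b - 1)) as E.
  replace (b - 1 + 1) with b in E by ring.
  unfold tz in Hz. rewrite Hz in E. nia.
Qed.

Definition represents (t : Z -> Z -> nat) (X Y : Z -> Z * Z) : Prop :=
  (forall a b, tz t a b = det (X a) (Y b)) /\
  (forall a, det (X a) (X (a + 1)) = 1) /\
  (forall b, det (Y (b + 1)) (Y b) = 1).

Section Representation.
Variable t : Z -> Z -> nat.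
Hypothesis Ht : SL2_tiling t.

(* Y_b is read off rows 0 and 1; X_a is the vector with det(X_a, Y_0) = t(a,0)
   and det(X_a, Y_1) = t(a,1). *)
Definition Yrep (b : Z) : Z * Z := (tz t 0 b, tz t 1 b).
Definition Xrep (a : Z) : Z * Z :=
  vsub (vscal (tz t a 0) (Yrep 1)) (vscal (tz t a 1) (Yrep 0)).

(* The rule on the 2x2 block at (0,b), and at (a,0), gives unimodularity. *)
Lemma Yrep_unimodular b : det (Yrep (b + 1)) (Yrep b) = 1.
Proof. pose proof (Ht 0 b) as E. unfold Yrep, det, tz; simpl in *. lia. Qed.

Lemma Xrep_unimodular a : det (Xrep a) (Xrep (a + 1)) = 1.
Proof.
  pose proof (Ht a 0) as E. pose proof (Yrep_unimodular 0) as E0.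
  change (0 + 1) with 1 in E0.
  transitivity ((tz t a 1 * tz t (a + 1) 0 - tz t a 0 * tz t (a + 1) 1)
                * det (Yrep 1) (Yrep 0)).
  - unfold Xrep. vec_ring.
  - rewrite E0, Z.mul_1_r. exact E.
Qed.

(* Both sides are SL_2-arrays agreeing on rows 0, 1 and column 0. *)
Lemma Xrep_Yrep a b : det (Xrep a) (Yrep b) = tz t a b.
Proof.
  pose proof (Yrep_unimodular 0) as E0. change (0 + 1) with 1 in E0.
  apply (SL2_unique (tz t) (fun a b => det (Xrep a) (Yrep b))).
  - exact Ht.
  - intros a' b'. rewrite plucker, Xrep_unimodular, Yrep_unimodular. ring.
  - apply tiling_nonzero, Ht.
  - intro a'. transitivity (tz t a' 0 * det (Yrep 1) (Yrep 0));
      [unfold Xrep; vec_ring | rewrite E0; ring].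
  - intro a'. transitivity (tz t a' 1 * det (Yrep 1) (Yrep 0));
      [unfold Xrep; vec_ring | rewrite E0; ring].
  - intro b'. transitivity (tz t 0 b' * det (Yrep 1) (Yrep 0));
      [unfold Xrep, Yrep; vec_ring | rewrite E0; ring].
Qed.

End Representation.

Lemma tiling_represented (t : Z -> Z -> nat) :
  SL2_tiling t -> exists X Y, represents t X Y.
Proof.
  intro Ht. exists (Xrep t), (Yrep t). repeat split.
  - intros a b. symmetry. apply Xrep_Yrep, Ht.
  - apply Xrep_unimodular, Ht.
  - apply Yrep_unimodular, Ht.
Qed.

Definition on_ones (t : Z -> Z -> nat) (p : Z * Z) : Prop := t (fst p) (snd p) = 1%nat.

Section Steps.
Variables (t : Z -> Z -> nat) (X Y : Z -> Z * Z).
Hypothesis Hrep : represents t X Y.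

Lemma det_on_ones c r : on_ones t (c, r) -> det (X c) (Y r) = 1.
Proof. intro H1. destruct Hrep as [Hdet _]. rewrite <- Hdet. unfold tz. now rewrite H1. Qed.

Lemma x_step c r :
  on_ones t (c, r) -> on_ones t (c + 1, r) -> X (c + 1) = vadd (X c) (Y r).
Proof.
  intros H0 H1. destruct Hrep as (_ & HX & _).
  apply unimodular_sum; [apply det_on_ones.. | apply HX]; assumption.
Qed.

Lemma y_step c r :
  on_ones t (c, r) -> on_ones t (c, r + 1) -> Y (r + 1) = vadd (X c) (Y r).
Proof.
  intros H0 H1. destruct Hrep as (_ & _ & HY).
  apply unimodular_sum; [apply det_on_ones | apply HY | apply det_on_ones]; assumption.
Qed.

Lemma horizontal_run c r (k : nat) :
  (forall j, (j <= k)%nat -> on_ones t (c + Z.of_nat j, r)) ->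
  X (c + Z.of_nat k) = vadd (X c) (vscal (Z.of_nat k) (Y r)).
Proof.
  induction k as [|k IH]; intro Hrun.
  - rewrite Z.add_0_r. vec_ring.
  - rewrite Nat2Z.inj_succ, <- Z.add_1_r, Z.add_assoc.
    rewrite (x_step (c + Z.of_nat k) r).
    + rewrite IH by (intros j Hj; apply Hrun; lia). vec_ring.
    + apply Hrun; lia.
    + replace (c + Z.of_nat k + 1) with (c + Z.of_nat (S k)) by lia. apply Hrun; lia.
Qed.

End Steps.

Lemma walk_next (c : nat -> Z) (m k : nat) :
  (forall m', c (S m') = c m' \/ c (S m') = c m' + 1) ->
  (m <= k)%nat -> c (S k) = c k + 1 -> exists m', c m' = c m + 1.
Proof.
  intros Hstep Hmk Hjump. remember (k - m)%nat as d eqn:Hd.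
  revert m Hmk Hd. induction d as [|d IH]; intros m Hmk Hd.
  - exists (S k). replace m with k by lia. exact Hjump.
  - destruct (Hstep m) as [Hflat | Hup].
    + rewrite <- Hflat. apply IH; lia.
    + exists (S m). exact Hup.
Qed.

Lemma walk_hits (c : nat -> Z) :
  (forall m, c (S m) = c m \/ c (S m) = c m + 1) ->
  (forall m, exists k, (m <= k)%nat /\ c (S k) = c k + 1) ->
  forall n : nat, exists m, c m = c O + Z.of_nat n.
Proof.
  intros Hstep Hjumps n. induction n as [|n [m Hm]].
  - exists O. ring.
  - destruct (Hjumps m) as (k & Hmk & Hk).
    destruct (walk_next c m k Hstep Hmk Hk) as [m' Hm'].
    exists m'. lia.
Qed.

Section Walks.
Variables (s : nat -> letter) (Q R : nat -> Z * Z).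
Hypothesis HQ : forall m, Q (S m) = vadd (Q m) (step (s m)).
Hypothesis HR : forall m, R m = vadd (R (S m)) (step (swap (s m))).

Lemma walks_antidiagonal m : fst (Q m) + snd (R m) = fst (Q O) + snd (R O).
Proof.
  induction m as [|m IH]; [reflexivity|].
  rewrite <- IH, HQ, (HR m). destruct (s m); unfold vadd; simpl; ring.
Qed.

Lemma walk_columns :
  (forall m, exists k, (m <= k)%nat /\ s k = lx) ->
  forall n : nat, exists m, fst (Q m) = fst (Q O) + Z.of_nat n.
Proof.
  intro Hx. apply walk_hits.
  - intro m. rewrite HQ. destruct (s m); unfold vadd; simpl; lia.
  - intro m. destruct (Hx m) as (k & Hmk & Hk). exists k.
    split; [exact Hmk|]. rewrite HQ, Hk. reflexivity.
Qed.

End Walks.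

Definition mirror (A B C D v : Z * Z) : Z * Z :=
  vsub (vscal (det v B) C) (vscal (det A v) D).

Lemma mirror_add A B C D u v :
  mirror A B C D (vadd u v) = vadd (mirror A B C D u) (mirror A B C D v).
Proof. unfold mirror. vec_ring. Qed.

Lemma mirror_A A B C D : det A B = 1 -> mirror A B C D A = C.
Proof.
  intro HAB. unfold mirror. replace (det A A) with 0 by vec_ring. rewrite HAB. vec_ring.
Qed.

Lemma mirror_B A B C D : det A B = 1 -> mirror A B C D B = vopp D.
Proof.
  intro HAB. unfold mirror. replace (det B B) with 0 by vec_ring. rewrite HAB. vec_ring.
Qed.

Section MirrorWalks.
Variables (t : Z -> Z -> nat) (X Y : Z -> Z * Z) (A B C D : Z * Z).
Hypothesis Hrep : represents t X Y.
Variables (s : nat -> letter) (Q R : nat -> Z * Z).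
Hypothesis HQ : forall m, Q (S m) = vadd (Q m) (step (s m)).
Hypothesis HR : forall m, R m = vadd (R (S m)) (step (swap (s m))).
Hypothesis Hones : forall m, on_ones t (Q m) /\ on_ones t (R m).

Definition mirrored (q r : Z * Z) : Prop :=
  Y (snd r) = mirror A B C D (X (fst q)) /\ X (fst r) = vopp (mirror A B C D (Y (snd q))).

(* Linearity of the mirror map and the step rules on both walks preserve
   the exchange property. *)
Lemma mirror_invariant : mirrored (Q O) (R O) -> forall m, mirrored (Q m) (R m).
Proof.
  intros H0 m. induction m as [|m [IHy IHx]]; [exact H0|].
  pose proof (Hones m) as [HQm HRm]. pose proof (Hones (S m)) as [HQm' HRm'].
  pose proof (HQ m) as EQ. pose proof (HR m) as ER.
  destruct (Q m) as [cQ rQ], (R (S m)) as [cR rR].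
  unfold mirrored in *; destruct (s m); unfold vadd in EQ, ER; simpl in EQ, ER;
    rewrite EQ in *; rewrite ER in *; simpl in *; rewrite Z.add_0_r in *.
  - split; [|exact IHx].
    rewrite (x_step t X Y Hrep cQ rQ), mirror_add, <- IHy by assumption.
    rewrite (y_step t X Y Hrep cR rR), IHx by assumption. vec_ring.
  - split; [exact IHy|].
    rewrite (y_step t X Y Hrep cQ rQ), mirror_add, <- IHy by assumption.
    assert (Hm : mirror A B C D (Y rQ) = vopp (X (cR + 1))) by (rewrite IHx; vec_ring).
    rewrite Hm, (x_step t X Y Hrep cR rR) by assumption. vec_ring.
Qed.

End MirrorWalks.

Lemma mid_factor_length h : length (mid_factor h) = (h + 2)%nat.
Proof. unfold mid_factor. simpl. rewrite length_app, repeat_length. simpl. lia. Qed.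

Lemma frontier_right s h (m : nat) : frontier s h (Z.of_nat h + 2 + Z.of_nat m) = s m.
Proof.
  unfold frontier, bi_concat. rewrite mid_factor_length.
  destruct (Z.ltb_spec (Z.of_nat h + 2 + Z.of_nat m) 0); [lia|].
  destruct (Z.ltb_spec (Z.of_nat h + 2 + Z.of_nat m) (Z.of_nat (h + 2))); [lia|].
  f_equal. lia.
Qed.

Lemma frontier_left s h (m : nat) : frontier s h (-1 - Z.of_nat m) = swap (s m).
Proof.
  unfold frontier, bi_concat, transpose_r.
  destruct (Z.ltb_spec (-1 - Z.of_nat m) 0); [|lia].
  do 2 f_equal. lia.
Qed.

Lemma frontier_first s h : frontier s h 0 = ly.
Proof. reflexivity. Qed.

Lemma frontier_last s h : frontier s h (Z.of_nat h + 1) = ly.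
Proof.
  unfold frontier, bi_concat. rewrite mid_factor_length.
  destruct (Z.ltb_spec (Z.of_nat h + 1) 0); [lia|].
  destruct (Z.ltb_spec (Z.of_nat h + 1) (Z.of_nat (h + 2))); [|lia].
  replace (Z.to_nat (Z.of_nat h + 1)) with (S h) by lia. unfold mid_factor. simpl.
  rewrite app_nth2; rewrite repeat_length; [now rewrite Nat.sub_diag | lia].
Qed.

Lemma frontier_inner s h (j : nat) : (1 <= j <= h)%nat -> frontier s h (Z.of_nat j) = lx.
Proof.
  intro Hj. unfold frontier, bi_concat. rewrite mid_factor_length.
  destruct (Z.ltb_spec (Z.of_nat j) 0); [lia|].
  destruct (Z.ltb_spec (Z.of_nat j) (Z.of_nat (h + 2))); [|lia].
  rewrite Nat2Z.id. destruct j as [|j]; [lia|]. unfold mid_factor. simpl.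
  rewrite app_nth1 by (rewrite repeat_length; lia). apply nth_repeat.
Qed.

Lemma frontier_x_recurs s h :
  ~ ult_const_right (frontier s h) -> forall m, exists k, (m <= k)%nat /\ s k = lx.
Proof.
  intros Hright m. apply NNPP. intro Hnone. apply Hright.
  exists (Z.of_nat h + 2 + Z.of_nat m), ly. intros z Hz.
  replace z with (Z.of_nat h + 2 + Z.of_nat (Z.to_nat (z - Z.of_nat h - 2))) by lia.
  rewrite frontier_right. destruct (s _) eqn:Hs; [|reflexivity].
  exfalso. apply Hnone. eexists. split; [|exact Hs]. lia.
Qed.

Section Frontier.
Variables (h : nat) (s : nat -> letter) (P : Z -> Z * Z).
Hypothesis Hemb : embeds (frontier s h) P.

Lemma embeds_step i : P i = vadd (P (i - 1)) (step (frontier s h i)).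
Proof. destruct (Hemb i). now apply injective_projections. Qed.

Lemma frontier_row (j : nat) : (j <= h)%nat -> P (Z.of_nat j) = vadd (P 0) (Z.of_nat j, 0).
Proof.
  induction j as [|j IH]; intro Hj.
  - unfold vadd; simpl. rewrite !Z.add_0_r. now destruct (P 0).
  - rewrite embeds_step, frontier_inner by lia.
    replace (Z.of_nat (S j) - 1) with (Z.of_nat j) by lia.
    rewrite IH by lia. unfold vadd; simpl. f_equal; lia.
Qed.

Lemma frontier_after : P (Z.of_nat h + 1) = vadd (P (Z.of_nat h)) (0, 1).
Proof. rewrite embeds_step, frontier_last. do 2 f_equal. ring. Qed.

Lemma frontier_before : P 0 = vadd (P (-1)) (0, 1).
Proof. rewrite embeds_step, frontier_first. reflexivity. Qed.

Lemma right_walk (m : nat) :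
  P (Z.of_nat h + 1 + Z.of_nat (S m))
  = vadd (P (Z.of_nat h + 1 + Z.of_nat m)) (step (s m)).
Proof.
  rewrite embeds_step. replace (Z.of_nat h + 1 + Z.of_nat (S m)) with
    (Z.of_nat h + 2 + Z.of_nat m) by lia.
  rewrite frontier_right. f_equal. f_equal. lia.
Qed.

Lemma left_walk (m : nat) :
  P (-1 - Z.of_nat m) = vadd (P (-1 - Z.of_nat (S m))) (step (swap (s m))).
Proof.
  rewrite embeds_step, frontier_left. f_equal. f_equal. lia.
Qed.

End Frontier.

Lemma frontier_corners h s P :
  embeds (frontier s h) P ->
  let a0 := fst (P (Z.of_nat h)) in let b0 := snd (P (Z.of_nat h)) in
  (forall j : nat, (j <= h)%nat -> P (Z.of_nat j) = (a0 - Z.of_nat h + Z.of_nat j, b0)) /\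
  P (Z.of_nat h + 1) = (a0, b0 + 1) /\
  P (-1) = (a0 - Z.of_nat h, b0 - 1).
Proof.
  intros Hemb a0 b0.
  assert (Hrow : forall j, (j <= h)%nat -> P (Z.of_nat j) = (a0 - Z.of_nat h + Z.of_nat j, b0)).
  { intros j Hj. unfold a0, b0. rewrite !(frontier_row h s P Hemb) by lia.
    unfold vadd; simpl. f_equal; ring. }
  split; [exact Hrow|]. split.
  - rewrite (frontier_after h s P Hemb). unfold vadd, a0, b0; simpl. f_equal. ring.
  - pose proof (frontier_before h s P Hemb) as E.
    pose proof (Hrow 0%nat (Nat.le_0_l h)) as E0. simpl in E0. rewrite E0 in E. destruct (P (-1)).
    unfold vadd in E; simpl in E. injection E as E1 E2. f_equal; lia.
Qed.

(* The mirror map of the factor y x^h y, in terms of A = X_a0 and Yb = Y_b0. *)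
Definition hook_map (h : Z) (A Yb : Z * Z) : Z * Z -> Z * Z :=
  mirror A (vadd A Yb) (vsub Yb (vsub A (vscal h Yb))) (vsub A (vscal h Yb)).

(* The determinant identity giving j_n (u = w) and k_n (w = next of u). *)
Lemma hook_map_det h A Yb u w :
  det u (hook_map h A Yb w) = (h + 1) * det u Yb * det w Yb - det A Yb * det u w.
Proof. unfold hook_map, mirror. vec_ring. Qed.

Section FrontierTiling.
Variables (h : nat) (s : nat -> letter) (P : Z -> Z * Z).
Variables (t : Z -> Z -> nat) (X Y : Z -> Z * Z).
Hypothesis Hemb : embeds (frontier s h) P.
Hypothesis Hext : extends t P.
Hypothesis Hrep : represents t X Y.

Let a0 := fst (P (Z.of_nat h)).
Let b0 := snd (P (Z.of_nat h)).

Lemma ones_at i c r : P i = (c, r) -> on_ones t (c, r).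
Proof. intro E. pose proof (Hext i) as H1. rewrite E in H1. exact H1. Qed.

Lemma corner_vectors :
  Y (b0 + 1) = vadd (X a0) (Y b0) /\
  X (a0 - Z.of_nat h) = vsub (X a0) (vscal (Z.of_nat h) (Y b0)) /\
  Y (b0 - 1) = vsub (Y b0) (X (a0 - Z.of_nat h)).
Proof.
  destruct (frontier_corners h s P Hemb) as (Hrow & Hafter & Hbefore).
  fold a0 b0 in Hrow, Hafter, Hbefore.
  assert (HI : P (Z.of_nat h) = (a0, b0)) by (unfold a0, b0; now destruct (P _)).
  repeat split.
  - apply (y_step t X Y Hrep); [apply (ones_at _ _ _ HI) | apply (ones_at _ _ _ Hafter)].
  - assert (Hrun := horizontal_run t X Y Hrep (a0 - Z.of_nat h) b0 h).
    replace (a0 - Z.of_nat h + Z.of_nat h) with a0 in Hrun by ring.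
    rewrite Hrun; [vec_ring|]. intros j Hj. apply (ones_at (Z.of_nat j)), Hrow, Hj.
  - pose proof (y_step t X Y Hrep (a0 - Z.of_nat h) (b0 - 1)) as Hy.
    replace (b0 - 1 + 1) with b0 in Hy by ring.
    rewrite Hy; [vec_ring | apply (ones_at _ _ _ Hbefore) |].
    apply (ones_at 0). pose proof (Hrow 0%nat (Nat.le_0_l h)) as E. simpl in E. rewrite E.
    f_equal. ring.
Qed.

Lemma frontier_mirror :
  ~ ult_const_right (frontier s h) ->
  forall n : nat,
    Y (b0 - 1 - Z.of_nat n) = hook_map (Z.of_nat h) (X a0) (Y b0) (X (a0 + Z.of_nat n)).
Proof.
  intros Hright n.
  destruct corner_vectors as (HB & HD & HC).
  destruct (frontier_corners h s P Hemb) as (_ & Hafter & Hbefore).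
  fold a0 b0 in Hafter, Hbefore.
  unfold hook_map. rewrite <- HB, <- HD, <- HC.
  set (A := X a0). set (B := Y (b0 + 1)). set (C := Y (b0 - 1)). set (D := X (a0 - Z.of_nat h)).
  set (Q := fun m : nat => P (Z.of_nat h + 1 + Z.of_nat m)).
  set (R := fun m : nat => P (-1 - Z.of_nat m)).
  assert (HQ0 : Q O = (a0, b0 + 1)) by (unfold Q; now rewrite Z.add_0_r).
  assert (HR0 : R O = (a0 - Z.of_nat h, b0 - 1)) by (unfold R; now rewrite Z.sub_0_r).
  assert (HQ : forall m, Q (S m) = vadd (Q m) (step (s m))) by apply (right_walk h s P Hemb).
  assert (HR : forall m, R m = vadd (R (S m)) (step (swap (s m)))) by apply (left_walk h s P Hemb).
  assert (HAB : det A B = 1) by exact (det_on_ones t X Y Hrep _ _ (ones_at _ _ _ Hafter)).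
  assert (Hinv : forall m, mirrored X Y A B C D (Q m) (R m)).
  { apply (mirror_invariant t X Y A B C D Hrep s Q R HQ HR).
    - intro m. split; apply Hext.
    - rewrite HQ0, HR0. split; simpl.
      + now rewrite mirror_A.
      + rewrite mirror_B by exact HAB. unfold D. vec_ring. }
  destruct (walk_columns s Q HQ (frontier_x_recurs s h Hright) n) as [m Hm].
  pose proof (walks_antidiagonal s Q R HQ HR m) as Hdiag.
  rewrite HQ0, HR0, Hm in *. simpl in Hm, Hdiag.
  replace (b0 - 1 - Z.of_nat n) with (snd (R m)) by lia.
  rewrite <- Hm. apply Hinv.
Qed.

End FrontierTiling.

Theorem lemma2 (h : nat) (s : nat -> letter)
  (Hadm : admissible (frontier s h))
  (P : Z -> Z * Z) (Hemb : embeds (frontier s h) P)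
  (t : Z -> Z -> nat) (Ht : SL2_tiling t) (Hext : extends t P) :
  let I := P (Z.of_nat h) in
  let i_ n := t (fst I + Z.of_nat n) (snd I) in
  let j_ n := t (fst I + Z.of_nat n) (snd I - 1 - Z.of_nat n) in
  let k_ n := t (fst I + Z.of_nat n) (snd I - 2 - Z.of_nat n) in
  forall n : nat,
    j_ n = ((h + 1) * i_ n ^ 2)%nat /\
    (k_ n + 1 = (h + 1) * i_ n * i_ (S n))%nat.
Proof.
  intros I i_ j_ k_ n. unfold i_, j_, k_.
  destruct (tiling_represented t Ht) as (X & Y & Hrep).
  pose proof (frontier_mirror h s P t X Y Hemb Hext Hrep (proj1 Hadm)) as Hmir.
  destruct Hrep as (Hdet & HX & _). fold I in Hmir.
  assert (Ht_det : forall a b, Z.of_nat (t a b) = det (X a) (Y b)) by exact Hdet.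
  set (a0 := fst I) in *. set (b0 := snd I) in *.
  assert (HI : det (X a0) (Y b0) = 1).
  { rewrite <- Ht_det. unfold a0, b0, I. now rewrite Hext. }
  split; apply Nat2Z.inj;
    rewrite ?Nat2Z.inj_mul, ?Nat2Z.inj_pow, !Nat2Z.inj_add, !Ht_det;
    change (Z.of_nat 1) with 1.
  - rewrite Hmir, hook_map_det, det_self. change (Z.of_nat 2) with 2. ring.
  - replace (b0 - 2 - Z.of_nat n) with (b0 - 1 - Z.of_nat (S n)) by lia.
    rewrite Hmir, hook_map_det, HI, Nat2Z.inj_succ, <- Z.add_1_r, Z.add_assoc, HX. ring.
Qed.
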